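(* Let $G$ be any group (discrete). Then $\ell^1(G)\cdot\ell^\infty(G)^*\subseteq\ell^1(G)$ if and only if $G$ is finite.
   Context: $\ell^1(G)$ is the group algebra with convolution; its second dual is identified with $\ell^\infty(G)^*$ and carries the first Arens product: for $a,b\in\ell^1(G)$, $a'\in\ell^\infty(G)$, $a'',b''\in\ell^\infty(G)^*$, $\langle a'a,b\rangle=\langle a',ab\rangle$, $\langle b''a',a\rangle=\langle b'',a'a\rangle$, $\langle a''\cdot b'',a'\rangle=\langle a'',b''a'\rangle$. The set $\ell^1(G)\cdot\ell^\infty(G)^*$ means $\{a\cdot a'': a\in\ell^1(G),\,a''\in\ell^\infty(G)^*\}$, with $\ell^1(G)$ canonically embedded in its bidual. *)

From HB Require Import structures.
From mathcomp Require Import all_boot all_order all_algebra.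
From mathcomp Require Import all_classical all_reals.
From mathcomp Require Import topology normedtype sequences numfun esum.
From mathcomp Require Import complex.

Set Implicit Arguments.
Unset Strict Implicit.
Unset Printing Implicit Defensive.
Import Order.TTheory GRing.Theory Num.Theory.

Local Open Scope classical_set_scope.
Local Open Scope ring_scope.

Section L1Bidual.
Variables (R : realType) (G : groupType).
Local Notation C := (R[i]).

Definition cmod (z : C) : R := Num.sqrt (complex.Re z ^+ 2 + complex.Im z ^+ 2).

Definition is_l1 (a : G -> C) : Prop :=
  (\esum_(x in [set: G]) (cmod (a x))%:E < +oo)%E.

Definition is_linf (f : G -> C) : Prop :=
  exists M : R, forall x, cmod (f x) <= M.

Definition rsum (f : G -> R) : R :=
  fine (\esum_(x in [set: G]) (Num.max (f x) 0)%:E)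
  - fine (\esum_(x in [set: G]) (Num.max (- f x) 0)%:E).

Definition csum (f : G -> C) : C :=
  Complex (rsum (fun x => complex.Re (f x))) (rsum (fun x => complex.Im (f x))).

Definition is_linf_dual (Phi : (G -> C) -> C) : Prop :=
  (forall (c : C) (f g : G -> C), is_linf f -> is_linf g ->
      Phi (fun x => c * f x + g x) = c * Phi f + Phi g) /\
  (exists K : R, forall (f : G -> C) (M : R),
      (forall x, cmod (f x) <= M) -> cmod (Phi f) <= K * M).

Definition delta (g : G) : G -> C := fun x => if x == g then 1 else 0.

Definition conv (a b : G -> C) : G -> C :=
  fun x => csum (fun y => a y * b ((y^-1 * x)%g)).

Definition pairing (a' b : G -> C) : C := csum (fun x => a' x * b x).

(* a' a in l^oo(G) = l^1(G)^*, defined by <a' a, b> = <a', a b>;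
   as a function on G its value at z is <a' a, delta z> *)
Definition lact (a' a : G -> C) : G -> C :=
  fun z => pairing a' (conv a (delta z)).

(* b'' a' in l^oo(G), defined by <b'' a', a> = <b'', a' a>;
   its value at g is <b'', a' delta_g> *)
Definition ract (b'' : (G -> C) -> C) (a' : G -> C) : G -> C :=
  fun g => b'' (lact a' (delta g)).

Definition arens (a'' b'' : (G -> C) -> C) : (G -> C) -> C :=
  fun a' => a'' (ract b'' a').

Definition embed (a : G -> C) : (G -> C) -> C := fun a' => pairing a' a.

End L1Bidual.

(** If [G] is infinite, the limit along a free ultrafilter on [G] is a
    bounded functional [Phi] on l^oo(G).  Since [delta 1] is a left unit for
    the first Arens product, [delta 1 . Phi = Phi]; were [Phi] given by some
    [c] in l^1(G), testing it against point masses would force [c = 0]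
    (a free ultrafilter ignores finite sets), whereas [Phi 1 = 1].
    If [G] is finite, every functional [a''] is linear on the finite span of
    the point masses, and [a . a''] is the element
    [c y = sum_x a x * a'' (fun w => delta y (x w))] of l^1(G). *)
From HB Require Import structures.
From mathcomp Require Import all_boot all_order all_algebra.
From mathcomp Require Import all_classical all_reals.
From mathcomp Require Import topology normedtype sequences numfun esum.
From mathcomp Require Import complex.
From mathcomp Require Import lra finmap ereal.

Set Implicit Arguments.
Unset Strict Implicit.
Unset Printing Implicit Defensive.
Import Order.TTheory GRing.Theory Num.Theory.
Import numFieldNormedType.Exports.
Local Open Scope classical_set_scope.
Local Open Scope ring_scope.

Definition l1_mul_bidual_in_l1 (R : realType) (G : groupType) : Prop :=
  forall (a : G -> R[i]) (a'' : (G -> R[i]) -> R[i]),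
    is_l1 a -> is_linf_dual a'' ->
    exists c : G -> R[i], is_l1 c /\
      forall a' : G -> R[i], is_linf a' ->
        arens (embed a) a'' a' = embed c a'.

Section ComplexModulus.
Variable R : realType.

Lemma cmod_ge0 (z : R[i]) : 0 <= cmod z.
Proof. exact: sqrtr_ge0. Qed.

Lemma cmod0 : cmod (0 : R[i]) = 0.
Proof. by rewrite /cmod /= expr0n /= addr0 sqrtr0. Qed.

Lemma cmod1 : cmod (1 : R[i]) = 1.
Proof. by rewrite /cmod /= expr0n expr1n /= addr0 sqrtr1. Qed.

Lemma normr_Re_le_cmod (z : R[i]) : `|complex.Re z| <= cmod z.
Proof. by rewrite /cmod -sqrtr_sqr ler_wsqrtr // lerDl sqr_ge0. Qed.

Lemma normr_Im_le_cmod (z : R[i]) : `|complex.Im z| <= cmod z.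
Proof. by rewrite /cmod -sqrtr_sqr ler_wsqrtr // lerDr sqr_ge0. Qed.

Lemma maxr0_subN (x : R) : Num.max x 0 - Num.max (- x) 0 = x.
Proof. by rewrite !maxEle; case: (lerP x 0); case: (lerP (- x) 0); lra. Qed.

End ComplexModulus.

Section PointMasses.
Variables (R : realType) (G : groupType).
Local Notation C := R[i].

Lemma esum_supp1 (h : G -> R) (g : G) : (forall x, 0 <= h x) ->
  (forall x, x != g -> h x = 0) ->
  (\esum_(x in [set: G]) (h x)%:E = (h g)%:E)%E.
Proof.
move=> h_ge0 hg; rewrite (esumID [set g]); last by move=> i _; rewrite lee_fin.
rewrite setTI esum_set1 ?lee_fin // esum1 ?adde0 // => x [_ /= /eqP xg].
by rewrite hg.
Qed.

Lemma rsum_supp1 (h : G -> R) (g : G) :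
  (forall x, x != g -> h x = 0) -> rsum h = h g.
Proof.
move=> hg; rewrite /rsum.
rewrite (@esum_supp1 (fun x => Num.max (h x) 0) g); last 2 first.
- by move=> x; rewrite le_max lexx orbT.
- by move=> x /hg ->; rewrite maxxx.
rewrite (@esum_supp1 (fun x => Num.max (- h x) 0) g); last 2 first.
- by move=> x; rewrite le_max lexx orbT.
- by move=> x /hg ->; rewrite oppr0 maxxx.
exact: maxr0_subN.
Qed.

Lemma csum_supp1 (f : G -> C) (g : G) :
  (forall x, x != g -> f x = 0) -> csum f = f g.
Proof.
by move=> fg; rewrite /csum !(@rsum_supp1 _ g) => [|x /fg ->|x /fg ->] //; case: (f g).
Qed.

Lemma cmod_delta (z x : G) : cmod (delta R z x) <= 1.
Proof. by rewrite /delta; case: ifP; rewrite ?cmod0 ?cmod1. Qed.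

Lemma is_l1_delta (z : G) : is_l1 (delta R z).
Proof.
rewrite /is_l1 (@esum_supp1 _ z); first exact: ltry.
- by move=> x; exact: cmod_ge0.
- by move=> x /negbTE xz; rewrite /delta xz cmod0.
Qed.

Lemma pairing_deltar (a' : G -> C) (z : G) : pairing a' (delta R z) = a' z.
Proof.
rewrite /pairing (@csum_supp1 _ z) /delta ?eqxx ?mulr1 // => x /negbTE ->.
by rewrite mulr0.
Qed.

Lemma pairing_deltal (c : G -> C) (z : G) : pairing (delta R z) c = c z.
Proof.
rewrite /pairing (@csum_supp1 _ z) /delta ?eqxx ?mul1r // => x /negbTE ->.
by rewrite mul0r.
Qed.

Lemma conv_delta (g z : G) : conv (delta R g) (delta R z) = delta R (g * z)%g.
Proof.
apply: funext => x; rewrite /conv (@csum_supp1 _ g).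
  rewrite /delta eqxx mul1r; congr (if _ then _ else _).
  by apply/eqP/eqP => [<-|->]; rewrite ?mulVKg ?mulKg.
by move=> y /negbTE yg; rewrite /delta yg mul0r.
Qed.

Lemma lact_delta (a' : G -> C) (g : G) :
  lact a' (delta R g) = fun z => a' (g * z)%g.
Proof. by apply: funext => z; rewrite /lact conv_delta pairing_deltar. Qed.

Lemma arens_embed_delta1 (a'' : (G -> C) -> C) (a' : G -> C) :
  arens (embed (delta R 1%g)) a'' a' = a'' a'.
Proof.
rewrite /arens /embed pairing_deltar /ract lact_delta.
by congr a''; apply: funext => z; rewrite mul1g.
Qed.

Lemma is_linf_cst (c : C) : is_linf (fun _ : G => c).
Proof. by exists (cmod c). Qed.

Lemma linf_dual0 (Phi : (G -> C) -> C) :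
  is_linf_dual Phi -> Phi (fun _ => 0) = 0.
Proof.
case=> lin _; have := lin (-1) _ _ (is_linf_cst 0) (is_linf_cst 0).
have -> : (fun _ : G => -1 * (0 : C) + 0) = (fun _ => 0).
  by apply: funext => x; rewrite mulr0 addr0.
by rewrite mulN1r addNr.
Qed.

Lemma linf_dualZ (Phi : (G -> C) -> C) (c : C) (f : G -> C) :
  is_linf_dual Phi -> is_linf f -> Phi (fun z => c * f z) = c * Phi f.
Proof.
move=> dPhi bf; have [lin _] := dPhi.
have := lin c f _ bf (is_linf_cst 0).
rewrite linf_dual0 // addr0 => <-; congr Phi.
by apply: funext => z; rewrite addr0.
Qed.

End PointMasses.

Section UltrafilterLimit.
Variables (R : realType) (T : eqType) (U : set_system T).
Hypothesis U_ultra : UltraFilter U.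

Lemma cvg_ultra_bounded (f : T -> R) (M : R) : (forall x, `|f x| <= M) ->
  exists2 p : R, `|p| <= M & f x @[x --> U] --> p.
Proof.
move=> fM.
have UM : (f @ U) `[- M, M]%classic.
  apply: (@filterS _ U _ setT); last exact: filterT.
  by move=> x _ /=; rewrite in_itv /= -ler_norml.
have [p [/= pM cp]] := @segment_compact R (- M) M (f @ U) _ UM.
exists p; first by move: pM; rewrite in_itv /= -ler_norml.
move=> B Bp /=.
case: (in_ultra_setVsetC (f @^-1` B) U_ultra) => // Uc.
by have [y []] := cp (~` B) B Uc Bp.
Qed.

Definition ultralim (f : T -> R) : R := lim (f x @[x --> U]).

Lemma ultralimE (f : T -> R) (p : R) : f x @[x --> U] --> p -> ultralim f = p.
Proof. exact: cvg_lim. Qed.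

Lemma ultralim_cvg (f : T -> R) (M : R) : (forall x, `|f x| <= M) ->
  f x @[x --> U] --> ultralim f.
Proof. by move=> /cvg_ultra_bounded [p _ fp]; rewrite (ultralimE fp). Qed.

Lemma ultralim_le (f : T -> R) (M : R) : (forall x, `|f x| <= M) ->
  `|ultralim f| <= M.
Proof. by move=> /cvg_ultra_bounded [p pM fp]; rewrite (ultralimE fp). Qed.

Lemma ultralim_lin (a b : R) (f g h : T -> R) (M1 M2 M3 : R) :
  (forall x, `|f x| <= M1) -> (forall x, `|g x| <= M2) ->
  (forall x, `|h x| <= M3) ->
  ultralim (fun x => a * f x + b * g x + h x) =
  a * ultralim f + b * ultralim g + ultralim h.
Proof.
move=> /ultralim_cvg cf /ultralim_cvg cg /ultralim_cvg ch; apply: ultralimE.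
by apply: cvgD => //; apply: cvgD; exact: cvgMl_tmp.
Qed.

Lemma ultralim_cst (c : R) : ultralim (fun _ => c) = c.
Proof. by apply: ultralimE; exact: cvg_cst. Qed.

Hypothesis U_free : @frechet_filter T `<=` U.

Lemma ultralim_supp1 (h : T -> R) (z : T) :
  (forall x, x != z -> h x = 0) -> ultralim h = 0.
Proof.
move=> hz; apply: ultralimE => B /nbhs_singleton B0.
apply: (@filterS _ U _ (~` [set z])); first by move=> x /= /eqP xz; rewrite hz.
by apply: U_free; rewrite /frechet_filter /= setCK; exact: finite_set1.
Qed.

End UltrafilterLimit.

Section ComplexUltrafilterLimit.
Variables (R : realType) (G : groupType) (U : set_system G).
Hypothesis U_ultra : UltraFilter U.
Local Notation C := R[i].

Definition ultralimC (f : G -> C) : C :=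
  Complex (ultralim U (fun x => complex.Re (f x)))
          (ultralim U (fun x => complex.Im (f x))).

Lemma ultralimC_linf_dual : is_linf_dual ultralimC.
Proof.
split.
  move=> c f g [M1 fM1] [M2 gM2].
  have fr x : `|complex.Re (f x)| <= M1 by exact: le_trans (normr_Re_le_cmod _) _.
  have fi x : `|complex.Im (f x)| <= M1 by exact: le_trans (normr_Im_le_cmod _) _.
  have gr x : `|complex.Re (g x)| <= M2 by exact: le_trans (normr_Re_le_cmod _) _.
  have gi x : `|complex.Im (g x)| <= M2 by exact: le_trans (normr_Im_le_cmod _) _.
  rewrite /ultralimC.
  have -> : (fun x => complex.Re (c * f x + g x)) = (fun x =>
      complex.Re c * complex.Re (f x) + (- complex.Im c) * complex.Im (f x)
      + complex.Re (g x)).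
    by apply: funext => x; case: c => ? ?; case: (f x) => ? ?; case: (g x) => ? ? /=;
      rewrite mulNr.
  have -> : (fun x => complex.Im (c * f x + g x)) = (fun x =>
      complex.Re c * complex.Im (f x) + complex.Im c * complex.Re (f x)
      + complex.Im (g x)).
    by apply: funext => x; case: c => ? ?; case: (f x) => ? ?; case: (g x).
  rewrite (ultralim_lin U_ultra _ _ fr fi gr) (ultralim_lin U_ultra _ _ fi fr gi).
  by case: c => c1 c2 /=; congr Complex; lra.
exists 2 => f M fM.
have M_ge0 : 0 <= M by exact: le_trans (cmod_ge0 _) (fM 1%g).
have /ultralim_le : forall x, `|complex.Re (f x)| <= M.
  by move=> x; exact: le_trans (normr_Re_le_cmod _) _.
have /ultralim_le : forall x, `|complex.Im (f x)| <= M.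
  by move=> x; exact: le_trans (normr_Im_le_cmod _) _.
rewrite /cmod /ultralimC /=; set p := ultralim _ _; set q := ultralim _ _.
move=> qM pM.
rewrite -[X in _ <= X]ger0_norm ?mulr_ge0 // -sqrtr_sqr ler_wsqrtr //.
by move: pM qM; rewrite !ler_norml => /andP[? ?] /andP[? ?]; nra.
Qed.

Lemma ultralimC1 : ultralimC (fun _ => 1) = 1.
Proof. by rewrite /ultralimC /= !ultralim_cst. Qed.

Hypothesis U_free : @frechet_filter G `<=` U.

Lemma ultralimC_delta (z : G) : ultralimC (delta R z) = 0.
Proof.
by rewrite /ultralimC !(@ultralim_supp1 _ _ _ U_ultra U_free _ z) // => x /negbTE xz;
  rewrite /delta xz.
Qed.

End ComplexUltrafilterLimit.

Lemma not_l1_mul_bidual_in_l1 (R : realType) (G : groupType) :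
  infinite_set [set: G] -> ~ l1_mul_bidual_in_l1 R G.
Proof.
move=> infG l1_ideal.
have [U [U_ultra U_free]] := ultraFilterLemma (frechet_properfilter infG).
have [c [_ c_repr]] :=
  l1_ideal _ _ (is_l1_delta R 1%g) (ultralimC_linf_dual R U_ultra).
have ultralimCE a' : is_linf a' -> ultralimC U a' = embed c a'.
  by move=> /c_repr <-; rewrite arens_embed_delta1.
have c0 z : c z = 0.
  have /ultralimCE : is_linf (delta R z) by exists 1; exact: cmod_delta.
  by rewrite (ultralimC_delta _ U_ultra U_free) /embed pairing_deltal.
have /ultralimCE := is_linf_cst G (1 : R[i]).
rewrite ultralimC1 /embed /pairing (@csum_supp1 _ _ _ 1%g) ?c0 ?mulr0.
  by move/eqP; rewrite oner_eq0.
by move=> x _; rewrite c0 mulr0.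
Qed.

Section FiniteGroup.
Variables (R : realType) (G : groupType).
Hypothesis finG : finite_set [set: G].
Local Notation C := R[i].
Local Notation enumG := (fset_set [set: G]).

Lemma mem_enumG (x : G) : x \in enumG.
Proof. by rewrite in_fset_set // in_setT. Qed.

Lemma rsum_fin (h : G -> R) : rsum h = \sum_(x <- enumG) h x.
Proof.
rewrite /rsum !esum_fset // => [|i _|i _]; rewrite ?lee_fin ?le_max ?lexx ?orbT //.
rewrite !fsumEFin // /= !fsbig_finite // -sumrB.
by apply: eq_bigr => x _; exact: maxr0_subN.
Qed.

Lemma sumC (s : seq G) (f : G -> C) : \sum_(x <- s) f x =
  Complex (\sum_(x <- s) complex.Re (f x)) (\sum_(x <- s) complex.Im (f x)).
Proof.
elim: s => [|y s IH]; first by rewrite !big_nil.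
by rewrite !big_cons IH; case: (f y).
Qed.

Lemma csum_fin (f : G -> C) : csum f = \sum_(x <- enumG) f x.
Proof. by rewrite /csum !rsum_fin sumC. Qed.

Lemma is_linf_fin (f : G -> C) : is_linf f.
Proof.
exists (\sum_(x <- enumG) cmod (f x)) => x.
rewrite (bigD1_seq x) ?mem_enumG ?fset_uniq //= lerDl sumr_ge0 // => i _.
exact: cmod_ge0.
Qed.

Lemma is_l1_fin (f : G -> C) : is_l1 f.
Proof.
rewrite /is_l1 esum_fset // => [|i _]; last by rewrite lee_fin cmod_ge0.
by rewrite fsumEFin // ltry.
Qed.

Lemma linf_dual_sum (Phi : (G -> C) -> C) (s : seq G) (F : G -> G -> C) :
  is_linf_dual Phi ->
  Phi (fun z => \sum_(y <- s) F y z) = \sum_(y <- s) Phi (F y).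
Proof.
move=> dPhi; have [lin _] := dPhi.
elim: s => [|y s IH].
  rewrite big_nil -[RHS](linf_dual0 dPhi); congr Phi.
  by apply: funext => z; rewrite big_nil.
have -> : (fun z => \sum_(y0 <- y :: s) F y0 z) =
    (fun z => 1 * F y z + \sum_(y0 <- s) F y0 z).
  by apply: funext => z; rewrite big_cons mul1r.
by rewrite lin; [rewrite mul1r big_cons IH|exact: is_linf_fin..].
Qed.

Lemma l1_mul_bidual_in_l1_fin : l1_mul_bidual_in_l1 R G.
Proof.
move=> a a'' _ dual_a''.
pose P x y := a'' (fun w => delta R y (x * w)%g).
exists (fun y => \sum_(x <- enumG) a x * P x y); split; first exact: is_l1_fin.
move=> a' _; rewrite /arens /embed /pairing !csum_fin /ract.
have ract_fin x : a'' (lact a' (delta R x)) = \sum_(y <- enumG) a' y * P x y.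
  have -> : lact a' (delta R x) =
      (fun w => \sum_(y <- enumG) a' y * delta R y (x * w)%g).
    rewrite lact_delta; apply: funext => w.
    rewrite (bigD1_seq (x * w)%g) ?mem_enumG ?fset_uniq //= /delta eqxx mulr1.
    by rewrite big1 ?addr0 // => y /negbTE; rewrite eq_sym => ->; rewrite mulr0.
  rewrite linf_dual_sum //; apply: eq_bigr => y _.
  exact/linf_dualZ/is_linf_fin.
under eq_bigr do rewrite ract_fin mulr_suml.
rewrite exchange_big /=; apply: eq_bigr => y _.
by rewrite mulr_sumr; apply: eq_bigr => x _; rewrite -mulrA [P x y * _]mulrC.
Qed.

End FiniteGroup.

Theorem corollary2p4 (R : realType) (G : groupType) :
  (forall (a : G -> R[i]) (a'' : (G -> R[i]) -> R[i]),
      is_l1 a -> is_linf_dual a'' ->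
      exists c : G -> R[i], is_l1 c /\
        forall a' : G -> R[i], is_linf a' ->
          arens (embed a) a'' a' = embed c a')
  <-> finite_set [set: G].
Proof.
split=> [l1_ideal | finG]; last exact: l1_mul_bidual_in_l1_fin.
by apply: contrapT => infG; exact: not_l1_mul_bidual_in_l1 infG l1_ideal.
Qed.
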